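(* Let $G$ be a countable group and $\mu$ a symmetric probability measure on $G$ supported on a subgroup $H$ equipped with a finite symmetric generating set and its word length $|\cdot|$. Assume there are a constant $d>0$ and a positive increasing function $\phi$ on $(0,\infty)$, regularly varying of positive index at infinity, such that $\#\{h\in H:|h|\le r\}\asymp r^d$ ($r\ge1$) and $\mu(h)\asymp[\phi(1+|h|)(1+|h|)^d]^{-1}$ for $h\in H$. Let $\Phi(t)=t^2\big/\int_0^t\frac{s\,ds}{\phi(s)}$ for $t\ge1$. Then there is a constant $C$ such that for all $f\in L^2(G)$, all $R\ge1$ and all $h\in H$ with $|h|\le R$, $$\sum_{x\in G}|f(xh)-f(x)|^2\le C\Phi(R)\,\mathcal E_{G,\mu}(f,f).$$
   Context: For positive functions, $f_1\asymp f_2$ means $c_1f_1\le f_2\le c_2f_1$ for constants $0<c_1\le c_2$. A positive function $f$ is regularly varying of index $\gamma$ at infinity if $f(\lambda t)/f(t)\to\lambda^\gamma$ as $t\to\infty$ for every $\lambda>0$. $\mathcal E_{G,\mu}(f,f)=\frac12\sum_{x,y\in G}|f(xy)-f(x)|^2\mu(y)$ for $f\in L^2(G)$ (counting measure). *)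

From Stdlib Require Import Reals Lra List.
Import ListNotations.
Open Scope R_scope.

Definition is_group {G : Type} (mul : G -> G -> G) (inv : G -> G) (e : G) : Prop :=
  (forall x y z, mul (mul x y) z = mul x (mul y z)) /\
  (forall x, mul e x = x) /\ (forall x, mul x e = x) /\
  (forall x, mul (inv x) x = e) /\ (forall x, mul x (inv x) = e).

Definition countable (G : Type) : Prop :=
  exists en : nat -> G, forall x, exists n, en n = x.

Definition lsum {T : Type} (F : T -> R) (l : list T) : R :=
  fold_right (fun x acc => F x + acc) 0 l.

Definition fin_sums {T : Type} (F : T -> R) : R -> Prop :=
  fun s => exists l : list T, NoDup l /\ s = lsum F l.

(* sum_{x in T} F x = s  (F nonnegative): s is the sup of the finite partial sums *)
Definition sums_to {T : Type} (F : T -> R) (s : R) : Prop := is_lub (fin_sums F) s.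

Definition in_L2 {G : Type} (f : G -> R) : Prop :=
  exists B, forall l : list G, NoDup l -> lsum (fun x => (f x)^2) l <= B.

Definition word_le {G : Type} (mul : G -> G -> G) (e : G) (S : list G) (h : G) (n : nat)
  : Prop :=
  exists w : list G, (length w <= n)%nat /\ Forall (fun s => In s S) w /\
                     fold_right mul e w = h.

Definition word_length {G : Type} (mul : G -> G -> G) (e : G) (S : list G) (h : G) (n : nat)
  : Prop :=
  word_le mul e S h n /\ forall m, word_le mul e S h m -> (n <= m)%nat.

Definition regularly_varying (phi : R -> R) (gamma : R) : Prop :=
  forall lam, 0 < lam ->
    forall eps, 0 < eps -> exists T, forall t, T < t ->
      Rabs (phi (lam * t) / phi t - Rpower lam gamma) < eps.

Definition improper_int0 (f : R -> R) (t I : R) : Prop :=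
  forall eps, 0 < eps -> exists delta, 0 < delta /\
    forall a, 0 < a < delta ->
      exists pr : Riemann_integrable f a t, Rabs (RiemannInt pr - I) < eps.

From Stdlib Require Import Reals List Lra Lia Classical ClassicalEpsilon ZArith FinFun.
Import ListNotations.
Open Scope R_scope.

(* Write [h] as a geodesic word and cut it into [m_j] pieces of length at most [M^(j-1)] at
   each scale [j].  A piece [g] at scale [j] is crossed by the detour [a -> a z -> a g],
   averaged over the stepping stones [z] with [2 M^(j-1) < |z| <= M^j - M^(j-1)]: both legs [z]
   and [z^-1 g] then lie in the shell [M^(j-1) < |w| <= M^j], where
   [mu w >~ 1 / (phi (M^j) M^(jd))], while by volume growth there are [~ M^(jd)] stepping
   stones.  Weighted Cauchy-Schwarz along the pieces (weight [m_j phi (M^j)] at scale [j]) and a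
   sum over translates bound [sum_x |f (x h) - f x|^2] by [sum_j m_j^2 phi (M^j)] times the
   energy.  Taking [m_j] proportional to [R M^(j-1) / phi (M^j)] makes this
   [~ R^2 / int_0^R s / phi(s) ds = Phi R], comparing the integral with a geometric sum by
   the doubling property of [phi] that regular variation provides. *)

(** * Finite sums and elementary estimates *)

Lemma lsum_nil {T} (F : T -> R) : lsum F [] = 0.
Proof. reflexivity. Qed.

Lemma lsum_cons {T} (F : T -> R) a l : lsum F (a :: l) = F a + lsum F l.
Proof. reflexivity. Qed.

Lemma lsum_app {T} (F : T -> R) l1 l2 : lsum F (l1 ++ l2) = lsum F l1 + lsum F l2.
Proof. induction l1; cbn [app]; rewrite ?lsum_cons, ?lsum_nil, ?IHl1; lra. Qed.

Lemma lsum_map {A B} (F : B -> R) (g : A -> B) l : lsum F (map g l) = lsum (fun x => F (g x)) l.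
Proof. induction l; cbn [map]; rewrite ?lsum_cons, ?IHl; reflexivity. Qed.

Lemma lsum_plus {T} (F G : T -> R) l : lsum (fun x => F x + G x) l = lsum F l + lsum G l.
Proof. induction l; rewrite ?lsum_cons, ?lsum_nil, ?IHl; lra. Qed.

Lemma lsum_scal {T} (c : R) (F : T -> R) l : lsum (fun x => c * F x) l = c * lsum F l.
Proof. induction l; rewrite ?lsum_cons, ?lsum_nil, ?IHl; lra. Qed.

Lemma lsum_ext {T} (F G : T -> R) l : (forall x, In x l -> F x = G x) -> lsum F l = lsum G l.
Proof.
  induction l; intros HFG; [reflexivity|].
  rewrite !lsum_cons, HFG, IHl; simpl; auto.
  intros; apply HFG; simpl; auto.
Qed.

Lemma lsum_le {T} (F G : T -> R) l : (forall x, In x l -> F x <= G x) -> lsum F l <= lsum G l.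
Proof.
  induction l; intros HFG; rewrite ?lsum_cons, ?lsum_nil; [lra|].
  apply Rplus_le_compat; [apply HFG; simpl; auto | apply IHl; intros; apply HFG; simpl; auto].
Qed.

Lemma lsum_nonneg {T} (F : T -> R) l : (forall x, In x l -> 0 <= F x) -> 0 <= lsum F l.
Proof.
  induction l; intros HF; rewrite ?lsum_cons, ?lsum_nil; [lra|].
  apply Rplus_le_le_0_compat; [apply HF; simpl; auto | apply IHl; intros; apply HF; simpl; auto].
Qed.

Lemma lsum_const {T} (c : R) (l : list T) : lsum (fun _ => c) l = INR (length l) * c.
Proof. induction l; cbn [length]; rewrite ?lsum_cons, ?lsum_nil, ?S_INR, ?IHl; simpl; lra. Qed.

Lemma lsum_repeat {T} (F : T -> R) (a : T) n : lsum F (repeat a n) = INR n * F a.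
Proof. induction n; cbn [repeat]; rewrite ?lsum_cons, ?IHn, ?S_INR; simpl; lra. Qed.

Lemma lsum_flat_map {A B} (F : B -> R) (g : A -> list B) l :
  lsum F (flat_map g l) = lsum (fun a => lsum F (g a)) l.
Proof. induction l; cbn [flat_map]; rewrite ?lsum_app, ?lsum_cons, ?IHl; reflexivity. Qed.

Lemma lsum_swap {A B} (F : A -> B -> R) la lb :
  lsum (fun a => lsum (fun b => F a b) lb) la = lsum (fun b => lsum (fun a => F a b) la) lb.
Proof.
  induction la as [|a la IH].
  - rewrite lsum_nil, <- (Rmult_0_r (INR (length lb))), <- lsum_const.
    apply lsum_ext; reflexivity.
  - rewrite lsum_cons, IH, <- lsum_plus. apply lsum_ext; reflexivity.
Qed.

Lemma lsum_list_prod {A B} (F : A * B -> R) la lb :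
  lsum F (list_prod la lb) = lsum (fun a => lsum (fun b => F (a, b)) lb) la.
Proof. induction la; cbn [list_prod]; rewrite ?lsum_app, ?lsum_map, ?lsum_cons, ?IHla; reflexivity. Qed.

Lemma lsum_term_le {T} (F : T -> R) l a :
  In a l -> (forall x, In x l -> 0 <= F x) -> F a <= lsum F l.
Proof.
  intros Ha HF. apply in_split in Ha as [l1 [l2 ->]].
  rewrite lsum_app, lsum_cons.
  assert (0 <= lsum F l1) by (apply lsum_nonneg; intros; apply HF, in_or_app; auto).
  assert (0 <= lsum F l2) by (apply lsum_nonneg; intros; apply HF, in_or_app; simpl; auto).
  lra.
Qed.

Lemma lsum_le_incl {T} (F : T -> R) (A B : list T) :
  NoDup A -> incl A B -> (forall x, 0 <= F x) -> lsum F A <= lsum F B.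
Proof.
  intros HA; revert B. induction HA as [|a A Ha HA IH]; intros B HAB HF.
  - rewrite lsum_nil. apply lsum_nonneg; auto.
  - destruct (in_split a B (HAB a (or_introl eq_refl))) as [B1 [B2 ->]].
    rewrite lsum_cons, lsum_app, lsum_cons.
    enough (lsum F A <= lsum F (B1 ++ B2)) by (rewrite lsum_app in *; lra).
    apply IH; auto. intros x Hx.
    destruct (in_app_or _ _ _ (HAB x (or_intror Hx))) as [H|[H|H]]; subst;
      auto using in_or_app; contradiction.
Qed.

Lemma Forall2_lsum {A B} (P : A -> B -> Prop) (F1 : A -> R) (F2 : B -> R) l1 l2 :
  Forall2 P l1 l2 -> (forall a b, P a b -> F1 a = F2 b) -> lsum F1 l1 = lsum F2 l2.
Proof. intros H HF; induction H; auto. rewrite !lsum_cons, (HF _ _ H), IHForall2; auto. Qed.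

Lemma Forall2_in_l {A B} (P : A -> B -> Prop) l1 l2 a :
  Forall2 P l1 l2 -> In a l1 -> exists b, In b l2 /\ P a b.
Proof.
  intros H; induction H; simpl; [tauto|]. intros [<-|Ha]; eauto.
  destruct (IHForall2 Ha) as [b [? ?]]; eauto.
Qed.

Lemma NoDup_list_prod {A B} (la : list A) (lb : list B) :
  NoDup la -> NoDup lb -> NoDup (list_prod la lb).
Proof.
  intros Ha Hb; induction Ha as [|a la Ha _ IH]; cbn [list_prod]; [constructor|].
  apply NoDup_app; auto.
  - apply Injective_map_NoDup; auto. intros x y Hxy; congruence.
  - intros [a' b] H1 H2. apply in_map_iff in H1 as [b' [E _]].
    apply in_prod_iff in H2 as [H2 _]. congruence.
Qed.

Lemma exists_NoDup_filter {T} (l : list T) (Q : T -> Prop) :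
  exists l', NoDup l' /\ forall x, In x l' <-> In x l /\ Q x.
Proof.
  induction l as [|a l [l' [Hn Hl]]].
  - exists []. split; [constructor | simpl; tauto].
  - destruct (classic (Q a /\ ~ In a l')) as [[Hq Hni]|Hno].
    + exists (a :: l'). split; [constructor; auto|]. intros x; simpl. rewrite Hl.
      split; [intros [<-|H]; tauto|]. intros [[<-|H] HQ]; auto.
    + exists l'. split; auto. intros x; simpl. rewrite Hl.
      split; [tauto|]. intros [[<-|H] HQ]; auto.
      destruct (classic (In a l')) as [Ha|Ha]; [apply Hl; exact Ha | tauto].
Qed.

Definition ceil_nat (x : R) : nat := Z.to_nat (up x).

Lemma ceil_nat_spec x : 0 <= x -> x < INR (ceil_nat x) <= x + 1.
Proof.
  intros Hx. destruct (archimed x) as [H1 H2].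
  assert (Hp : (0 <= up x)%Z) by (apply le_IZR; lra).
  unfold ceil_nat. rewrite INR_IZR_INZ, Z2Nat.id; auto. lra.
Qed.

Lemma exists_least_nat (P : nat -> Prop) : (exists k, P k) ->
  exists n, P n /\ forall k, (k < n)%nat -> ~ P k.
Proof.
  intros Hex. destruct (Wf_nat.dec_inh_nat_subset_has_unique_least_element P) as [n [[Hn Hmin] _]].
  - intros; apply classic.
  - exact Hex.
  - exists n. split; auto. intros k Hk HPk. specialize (Hmin k HPk). lia.
Qed.

Lemma sq_add_le_weighted (D S w W T : R) : 0 < w -> 0 <= W -> 0 <= T -> S^2 <= W * T ->
  (D + S)^2 <= (w + W) * (D^2 / w + T).
Proof.
  intros Hw HW HT HS.
  destruct (Req_dec W 0) as [H0|H0].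
  - subst W. assert (S = 0) by nra. subst. field_simplify; [|lra].
    assert (0 <= w * T) by nra. unfold Rdiv. nra.
  - assert (key : 2 * D * S <= W * (D^2 / w) + w * T).
    { assert (W * (W * (D^2/w) + w*T - 2*D*S) >= 0).
      { replace (W * (W * (D^2/w) + w*T - 2*D*S)) with
          ((W*D - w*S)^2 / w + w * (W*T - S^2)) by (field; lra).
        assert (0 <= (W*D - w*S)^2 / w)
          by (apply Rmult_le_pos; [apply pow2_ge_0 | left; apply Rinv_0_lt_compat; lra]).
        nra. }
      nra. }
    replace ((w + W) * (D^2 / w + T)) with (D^2 + W * (D^2/w) + w*T + W*T) by (field; lra).
    nra.
Qed.

Lemma Rpower_pos x y : 0 < Rpower x y.
Proof. apply exp_pos. Qed.

Lemma Rpower_mul x y d : 0 < x -> 0 < y -> Rpower (x * y) d = Rpower x d * Rpower y d.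
Proof. intros. symmetry. apply Rpower_mult_distr; auto. Qed.

(** * The integral of [s / phi s] *)

Section PhiIntegral.
Variable phi : R -> R.
Hypothesis Hphi_pos : forall t, 0 < t -> 0 < phi t.
Hypothesis Hphi_incr : forall s t, 0 < s -> s <= t -> phi s <= phi t.

Definition sphi (s : R) := s / phi s.

Lemma sphi_bounds u v s : 0 < u -> u <= s <= v -> u / phi v <= sphi s <= v / phi u.
Proof.
  intros Hu [H1 H2]. unfold sphi, Rdiv.
  assert (0 < phi u) by auto. assert (0 < phi s) by (apply Hphi_pos; lra).
  assert (phi u <= phi s) by (apply Hphi_incr; lra). assert (phi s <= phi v) by (apply Hphi_incr; lra).
  split; apply Rmult_le_compat; try lra; try (apply Rlt_le, Rinv_0_lt_compat; lra);
    apply Rinv_le_contravar; lra.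
Qed.

Lemma RiemannInt_sphi_bounds u v (pr : Riemann_integrable sphi u v) : 0 < u -> u <= v ->
  (u / phi v) * (v - u) <= RiemannInt pr <= (v / phi u) * (v - u).
Proof.
  intros Hu Huv. split.
  - rewrite <- (RiemannInt_P15 (RiemannInt_P14 u v (u / phi v))).
    apply RiemannInt_P19; auto. intros x Hx. apply (sphi_bounds u v x); lra.
  - rewrite <- (RiemannInt_P15 (RiemannInt_P14 u v (v / phi u))).
    apply RiemannInt_P19; auto. intros x Hx. apply (sphi_bounds u v x); lra.
Qed.

Hypothesis Hint : forall t, 1 <= t -> exists I, improper_int0 sphi t I.

Lemma sphi_integrable u v : 0 < u -> u <= v -> 1 <= v -> inhabited (Riemann_integrable sphi u v).
Proof.
  intros Hu Huv Hv. destruct (Hint v Hv) as [I HI]. destruct (HI 1 ltac:(lra)) as [d [Hd Hd']].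
  assert (Hm : 0 < Rmin d u <= Rmin d u) by (split; [apply Rmin_pos|]; lra).
  assert (Rmin d u <= d) by apply Rmin_l. assert (Rmin d u <= u) by apply Rmin_r.
  destruct (Hd' (Rmin d u / 2) ltac:(lra)) as [pr _].
  constructor. apply (@RiemannInt_P23 sphi (Rmin d u / 2) v u pr). lra.
Qed.

Lemma improper_int0_sphi_pos t I : 1 <= t -> improper_int0 sphi t I -> 0 < I.
Proof.
  intros Ht HI. set (L := (1/2) / phi t * (t - 1/2)).
  assert (HL : 0 < L).
  { unfold L. assert (0 < phi t) by (apply Hphi_pos; lra).
    apply Rmult_lt_0_compat; [|lra].
    unfold Rdiv. apply Rmult_lt_0_compat; [lra | apply Rinv_0_lt_compat; lra]. }
  destruct (HI (L/2) ltac:(lra)) as [d [Hd Hd']].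
  set (a := Rmin d (1/2) / 2).
  assert (Rmin d (1/2) <= d) by apply Rmin_l. assert (Rmin d (1/2) <= 1/2) by apply Rmin_r.
  assert (0 < Rmin d (1/2)) by (apply Rmin_pos; lra).
  destruct (Hd' a ltac:(unfold a; lra)) as [pr Hpr].
  assert (pr1 : Riemann_integrable sphi a (1/2))
    by (apply (@RiemannInt_P22 sphi a t); auto; unfold a; lra).
  assert (pr2 : Riemann_integrable sphi (1/2) t)
    by (apply (@RiemannInt_P23 sphi a t); auto; unfold a; lra).
  rewrite <- (RiemannInt_P26 pr1 pr2 pr) in Hpr.
  destruct (RiemannInt_sphi_bounds a (1/2) pr1 ltac:(unfold a; lra) ltac:(unfold a; lra)) as [Hlo1 _].
  destruct (RiemannInt_sphi_bounds (1/2) t pr2 ltac:(lra) ltac:(lra)) as [Hlo2 _].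
  assert (0 <= a / phi (1/2) * (1/2 - a)).
  { apply Rmult_le_pos; [|unfold a; lra]. unfold Rdiv. apply Rmult_le_pos; [unfold a; lra|].
    apply Rlt_le, Rinv_0_lt_compat, Hphi_pos; lra. }
  fold L in Hlo2. apply Rabs_def2 in Hpr. lra.
Qed.

Lemma improper_int0_sphi_split t I I1 (pr : Riemann_integrable sphi 1 t) : 1 <= t ->
  improper_int0 sphi t I -> improper_int0 sphi 1 I1 -> I <= I1 + RiemannInt pr.
Proof.
  intros Ht HI HI1. apply Rnot_lt_le. intros Hlt. set (eps := (I - I1 - RiemannInt pr) / 4).
  assert (He : 0 < eps) by (unfold eps; lra).
  destruct (HI eps He) as [d [Hd Hd']]. destruct (HI1 eps He) as [d1 [Hd1 Hd1']].
  set (a := Rmin (Rmin d d1) 1 / 2).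
  assert (0 < Rmin (Rmin d d1) 1) by (apply Rmin_pos; [apply Rmin_pos|]; lra).
  assert (Rmin (Rmin d d1) 1 <= Rmin d d1) by apply Rmin_l.
  assert (Rmin (Rmin d d1) 1 <= 1) by apply Rmin_r.
  assert (Rmin d d1 <= d) by apply Rmin_l. assert (Rmin d d1 <= d1) by apply Rmin_r.
  destruct (Hd' a ltac:(unfold a; lra)) as [pra Ha].
  destruct (Hd1' a ltac:(unfold a; lra)) as [pra1 Ha1].
  rewrite <- (RiemannInt_P26 pra1 pr pra) in Ha.
  apply Rabs_def2 in Ha. apply Rabs_def2 in Ha1. unfold eps in *. lra.
Qed.

(* On [[Mr^(j-1), Mr^j]] the integrand is at most [Mr^j / phi (Mr^(j-1))] and the length
   at most [Mr^j]. *)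
Lemma RiemannInt_sphi_le_geometric (Mr : R) (HMr : 1 <= Mr) :
  forall k t (pr : Riemann_integrable sphi 1 t), 1 <= t <= Mr ^ k ->
  RiemannInt pr <= lsum (fun j => Mr ^ (2 * j) / phi (Mr ^ (j - 1))) (seq 1 k).
Proof.
  induction k; intros t pr Ht.
  - simpl in Ht. assert (t = 1) by lra. subst t. rewrite RiemannInt_P9. simpl. lra.
  - rewrite seq_S, lsum_app, lsum_cons, lsum_nil. simpl (1 + k)%nat.
    assert (Hpk : 1 <= Mr ^ k) by (apply pow_R1_Rle; lra).
    assert (Hphik : 0 < phi (Mr ^ k)) by (apply Hphi_pos; lra).
    replace (S k - 1)%nat with k by lia.
    assert (Hterm : 0 <= Mr ^ (2 * S k) / phi (Mr ^ k))
      by (apply Rmult_le_pos; [apply pow_le; lra | apply Rlt_le, Rinv_0_lt_compat; auto]).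
    destruct (Rle_lt_dec t (Mr ^ k)) as [Hle|Hlt].
    + assert (IH' := IHk t pr ltac:(lra)). lra.
    + assert (pr1 : Riemann_integrable sphi 1 (Mr ^ k)) by (apply (@RiemannInt_P22 sphi 1 t); auto; lra).
      assert (pr2 : Riemann_integrable sphi (Mr ^ k) t) by (apply (@RiemannInt_P23 sphi 1 t); auto; lra).
      rewrite <- (RiemannInt_P26 pr1 pr2 pr).
      assert (IH' := IHk (Mr ^ k) pr1 ltac:(lra)).
      destruct (RiemannInt_sphi_bounds (Mr ^ k) t pr2 ltac:(lra) ltac:(lra)) as [_ H2].
      enough (t / phi (Mr ^ k) * (t - Mr ^ k) <= Mr ^ (2 * S k) / phi (Mr ^ k)) by lra.
      destruct Ht as [_ Ht]. simpl in Ht.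
      replace (Mr ^ (2 * S k)) with ((Mr * Mr ^ k) * (Mr * Mr ^ k))
        by (replace (2 * S k)%nat with (S k + S k)%nat by lia; rewrite pow_add; simpl; ring).
      unfold Rdiv. rewrite (Rmult_comm t), Rmult_assoc, (Rmult_comm ((Mr * Mr^k) * (Mr * Mr^k))).
      apply Rmult_le_compat_l; [apply Rlt_le, Rinv_0_lt_compat; auto|].
      assert (0 <= t - Mr ^ k) by lra. assert (t - Mr ^ k <= Mr * Mr ^ k) by lra. nra.
Qed.

End PhiIntegral.

(** * Number of pieces at each scale *)

Definition scale_cover (M : nat) (m : nat -> nat) (J : nat) :=
  lsum (fun j => INR (m j) * INR M ^ (j - 1)) (seq 1 J).
Definition scale_cost (psi : nat -> R) (m : nat -> nat) (J : nat) :=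
  lsum (fun j => INR (m j) * (psi j * INR (m j))) (seq 1 J).

Definition round_up2 (x : R) : nat := if Rle_dec 1 x then ceil_nat (2 * x) else 0.

Lemma round_up2_spec x : 0 <= x -> 2 * x - 2 <= INR (round_up2 x) /\ INR (round_up2 x) ^ 2 <= 9 * x ^ 2.
Proof.
  intros Hx. unfold round_up2. destruct (Rle_dec 1 x).
  - assert (H := ceil_nat_spec (2 * x) ltac:(lra)). split; [lra | nra].
  - simpl. split; nra.
Qed.

Lemma pow_ge_INR (Mr : R) n : 2 <= Mr -> INR n <= Mr ^ n.
Proof.
  intros H. induction n; [simpl; lra|]. rewrite S_INR. simpl.
  assert (1 <= Mr ^ n) by (apply pow_R1_Rle; lra). nra.
Qed.

Lemma lsum_geometric_le (Mr : R) J : 2 <= Mr -> (1 <= J)%nat ->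
  lsum (fun j => Mr ^ (j - 1)) (seq 1 J) <= 2 * Mr ^ (J - 1).
Proof.
  intros HM HJ. induction J as [|J IH]; [lia|]. destruct J as [|J].
  - simpl. lra.
  - rewrite seq_S, lsum_app, lsum_cons, lsum_nil. specialize (IH ltac:(lia)).
    replace (1 + S J - 1)%nat with (S J) by lia. replace (S (S J) - 1)%nat with (S J) by lia.
    replace (S J - 1)%nat with J in IH by lia. simpl in *.
    assert (0 <= Mr ^ J) by (apply pow_le; lra). nra.
Qed.

Lemma exists_least_scale (Mr R0 : R) : 2 <= Mr -> 4 <= R0 ->
  exists J, (1 <= J)%nat /\ Mr ^ (J - 1) <= R0 / 4 < Mr ^ J.
Proof.
  intros HM HR0.
  destruct (exists_least_nat (fun J => R0 / 4 < Mr ^ J)) as [J [HJ HJmin]].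
  { exists (ceil_nat R0). assert (H := ceil_nat_spec R0 ltac:(lra)).
    assert (H2 := pow_ge_INR Mr (ceil_nat R0) HM). lra. }
  destruct J as [|J]; [simpl in HJ; lra|].
  exists (S J). split; [lia|]. split; auto.
  apply Rnot_lt_le, HJmin. lia.
Qed.

(* Optimal allocation: [x j] pieces at scale [j], proportional to [M^(j-1) / psi j],
   minimize [sum m_j^2 psi_j] subject to covering [R0]; rounding costs a factor 9. *)
Lemma exists_scale_cover (M : nat) (psi : nat -> R) (J : nat) (R0 : R) :
  (2 <= M)%nat -> (1 <= J)%nat -> (forall j, 0 < psi j) -> 4 * INR M ^ (J - 1) <= R0 ->
  let W := lsum (fun j => INR M ^ (2 * (j - 1)) / psi j) (seq 1 J) in
  exists m, R0 <= scale_cover M m J /\ scale_cost psi m J <= 9 * R0 ^ 2 / W.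
Proof.
  intros HM HJ Hpsi HR0 W. set (Mr := INR M) in *.
  assert (HMr : 2 <= Mr) by (unfold Mr; replace 2 with (INR 2) by (simpl; lra); apply le_INR; auto).
  set (y := fun j => Mr ^ (2 * (j - 1)) / psi j).
  assert (Hy : forall j, 0 < y j).
  { intros j. apply Rmult_lt_0_compat; [apply pow_lt; lra | apply Rinv_0_lt_compat, Hpsi]. }
  assert (HW : 0 < W).
  { assert (H := lsum_term_le y (seq 1 J) 1%nat ltac:(apply in_seq; lia)
                    ltac:(intros; apply Rlt_le, Hy)).
    specialize (Hy 1%nat). change (lsum y (seq 1 J)) with W in H. lra. }
  assert (HR0p : 0 <= R0) by (assert (0 <= Mr ^ (J - 1)) by (apply pow_le; lra); lra).
  set (x := fun j => R0 * Mr ^ (j - 1) / (psi j * W)).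
  assert (Hx0 : forall j, 0 <= x j).
  { intros j. unfold x, Rdiv. apply Rmult_le_pos; [apply Rmult_le_pos; [lra | apply pow_le; lra]|].
    apply Rlt_le, Rinv_0_lt_compat, Rmult_lt_0_compat; auto. }
  assert (Hsq : forall j, Mr ^ (2 * (j - 1)) = Mr ^ (j - 1) * Mr ^ (j - 1))
    by (intros j; rewrite <- pow_add; f_equal; lia).
  assert (Hpsi0 : forall j, psi j <> 0) by (intros j; specialize (Hpsi j); lra).
  exists (fun j => round_up2 (x j)). split.
  - apply Rle_trans with (lsum (fun j => (2 * x j - 2) * Mr ^ (j - 1)) (seq 1 J)).
    + assert (Heq : lsum (fun j => (2 * x j - 2) * Mr ^ (j - 1)) (seq 1 J) =
                    2 * R0 - 2 * lsum (fun j => Mr ^ (j - 1)) (seq 1 J)).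
      { transitivity (lsum (fun j => 2 * (R0 / W) * y j + (-2) * Mr ^ (j - 1)) (seq 1 J)).
        - apply lsum_ext. intros j _. unfold x, y. rewrite Hsq.
          field. split; [auto | apply Rgt_not_eq, HW].
        - rewrite lsum_plus, !lsum_scal. change (lsum y (seq 1 J)) with W. field. apply Rgt_not_eq, HW. }
      assert (HG := lsum_geometric_le Mr J HMr HJ). lra.
    + apply lsum_le. intros j _. apply Rmult_le_compat_r; [apply pow_le, pos_INR|].
      apply round_up2_spec; auto.
  - apply Rle_trans with (lsum (fun j => 9 * (R0 ^ 2 / (W * W)) * y j) (seq 1 J)).
    + apply lsum_le. intros j _. destruct (round_up2_spec (x j) (Hx0 j)) as [_ Hm].
      apply Rle_trans with (9 * x j ^ 2 * psi j).
      * replace (INR (round_up2 (x j)) * (psi j * INR (round_up2 (x j))))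
          with (INR (round_up2 (x j)) ^ 2 * psi j) by ring.
        apply Rmult_le_compat_r; [apply Rlt_le, Hpsi | auto].
      * right. unfold x, y. rewrite Hsq. field. split; [auto | apply Rgt_not_eq, HW].
    + rewrite lsum_scal. change (lsum y (seq 1 J)) with W. right. field. apply Rgt_not_eq, HW.
Qed.

Section ScaleChoice.
Variable phi : R -> R.
Hypothesis Hphi_pos : forall t, 0 < t -> 0 < phi t.
Hypothesis Hphi_incr : forall s t, 0 < s -> s <= t -> phi s <= phi t.
Hypothesis Hint : forall t, 1 <= t -> exists I, improper_int0 (sphi phi) t I.
Variable M : nat.
Hypothesis HM : (4 <= M)%nat.
Variable A : R.
Hypothesis HA : forall j, (1 <= j)%nat -> phi (INR M ^ j) <= A * phi (INR M ^ (j - 1)).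
Variable I1 : R.
Hypothesis HI1 : improper_int0 (sphi phi) 1 I1.

Lemma INR_M_ge_4 : 4 <= INR M.
Proof. replace 4 with (INR 4) by (simpl; lra). apply le_INR; auto. Qed.

Lemma phi_M_pow_pos j : 0 < phi (INR M ^ j).
Proof. apply Hphi_pos, pow_lt. assert (H := INR_M_ge_4). lra. Qed.

(* Each annulus [[M^(j-1), M^j]] contributes [<= M^(2j) / phi (M^(j-1))], which the doubling
   bound [HA] turns into a multiple of the weight of scale [j]. *)
Lemma improper_int0_sphi_le_weights R0 I J : 1 <= R0 -> (1 <= J)%nat -> R0 <= INR M ^ (J + 1) ->
  improper_int0 (sphi phi) R0 I ->
  I <= (I1 * phi (INR M) + INR M ^ 2 * A + INR M ^ 4) *
       lsum (fun j => INR M ^ (2 * (j - 1)) / phi (INR M ^ j)) (seq 1 J).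
Proof.
  intros HR0 HJ HRJ HI. set (Mr := INR M) in *. assert (HMr := INR_M_ge_4). fold Mr in HMr.
  set (y := fun j => Mr ^ (2 * (j - 1)) / phi (Mr ^ j)).
  set (W := lsum y (seq 1 J)).
  assert (Hpos := phi_M_pow_pos). fold Mr in Hpos.
  assert (HyW : forall j, (1 <= j <= J)%nat -> y j <= W).
  { intros j Hj. apply lsum_term_le; [apply in_seq; lia|]. intros k _.
    apply Rmult_le_pos; [apply pow_le; lra | apply Rlt_le, Rinv_0_lt_compat, Hpos]. }
  destruct (sphi_integrable phi Hint 1 R0 ltac:(lra) HR0 HR0) as [pr].
  assert (Hsplit := improper_int0_sphi_split phi R0 I I1 pr HR0 HI HI1).
  assert (H3 := RiemannInt_sphi_le_geometric phi Hphi_pos Hphi_incr Mr ltac:(lra)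
                  (J + 1) R0 pr ltac:(lra)).
  rewrite Nat.add_1_r, seq_S, lsum_app, lsum_cons, lsum_nil in H3.
  assert (HT : lsum (fun j => Mr ^ (2 * j) / phi (Mr ^ (j - 1))) (seq 1 J) <= Mr ^ 2 * A * W).
  { unfold W. rewrite <- lsum_scal. apply lsum_le. intros j Hj. apply in_seq in Hj.
    assert (HAj := HA j ltac:(lia)). fold Mr in HAj.
    assert (Hp1' := Hpos (j - 1)%nat). assert (Hpj := Hpos j).
    unfold y. replace (Mr ^ (2 * j)) with (Mr ^ 2 * Mr ^ (2 * (j - 1)))
      by (rewrite <- pow_add; f_equal; lia).
    assert (0 <= Mr ^ 2 * Mr ^ (2 * (j - 1))) by (apply Rmult_le_pos; apply pow_le; lra).
    unfold Rdiv. replace (Mr ^ 2 * A * (Mr ^ (2 * (j - 1)) * / phi (Mr ^ j))) with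
      ((Mr ^ 2 * Mr ^ (2 * (j - 1))) * (A * / phi (Mr ^ j))) by ring.
    apply Rmult_le_compat_l; auto.
    apply (Rmult_le_reg_r (phi (Mr ^ j) * phi (Mr ^ (j - 1)))); [nra|].
    field_simplify; lra. }
  assert (HTJ : Mr ^ (2 * (1 + J)) / phi (Mr ^ (1 + J - 1)) <= Mr ^ 4 * W).
  { apply Rle_trans with (Mr ^ 4 * y J).
    - right. unfold y. replace (1 + J - 1)%nat with J by lia.
      replace (2 * (1 + J))%nat with (4 + 2 * (J - 1))%nat by lia. rewrite pow_add.
      field. specialize (Hpos J); lra.
    - apply Rmult_le_compat_l; [apply pow_le; lra|]. apply HyW; lia. }
  assert (HI1p : 0 < I1) by (apply (improper_int0_sphi_pos phi Hphi_pos Hphi_incr 1); auto; lra).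
  assert (HI1W : I1 <= I1 * phi Mr * W).
  { assert (Hp1 : 0 < phi Mr) by (apply Hphi_pos; lra).
    assert (H := HyW 1%nat ltac:(lia)). unfold y in H. simpl in H. rewrite Rmult_1_r in H.
    apply Rle_trans with (I1 * phi Mr * (1 / phi Mr)); [right; field; lra|].
    apply Rmult_le_compat_l; [nra | exact H]. }
  fold W. lra.
Qed.

Lemma scale_parameters_small R0 I : 1 <= R0 < 4 -> improper_int0 (sphi phi) R0 I ->
  R0 <= scale_cover M (fun _ => 4%nat) 1 /\
  scale_cost (fun j => phi (INR M ^ j)) (fun _ => 4%nat) 1 <=
    16 * phi (INR M) * (I1 + INR M ^ 2 / phi 1) * (R0 ^ 2 / I).
Proof.
  intros HR0 HI. assert (HMr := INR_M_ge_4).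
  assert (HIp : 0 < I) by (apply (improper_int0_sphi_pos phi Hphi_pos Hphi_incr R0); auto; lra).
  assert (HpM : 0 < phi (INR M)) by (apply Hphi_pos; lra).
  unfold scale_cover, scale_cost. change (seq 1 1) with [1%nat].
  rewrite !lsum_cons, !lsum_nil, pow_1. simpl (1 - 1)%nat. rewrite pow_O.
  replace (INR 4) with 4 by (simpl; lra). split; [lra|].
  destruct (sphi_integrable phi Hint 1 R0 ltac:(lra) ltac:(lra) ltac:(lra)) as [pr].
  assert (Hsplit := improper_int0_sphi_split phi R0 I I1 pr ltac:(lra) HI HI1).
  assert (H3 := RiemannInt_sphi_le_geometric phi Hphi_pos Hphi_incr (INR M) ltac:(lra) 1 R0 pr
                  ltac:(simpl; lra)).
  change (seq 1 1) with [1%nat] in H3. rewrite lsum_cons, lsum_nil in H3.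
  simpl (2 * 1)%nat in H3. simpl (1 - 1)%nat in H3. rewrite pow_O in H3.
  assert (Hq : 1 <= (I1 + INR M ^ 2 / phi 1) / I).
  { apply (Rmult_le_reg_r I); [lra|]. unfold Rdiv. rewrite Rmult_assoc, Rinv_l; lra. }
  assert (1 <= (I1 + INR M ^ 2 / phi 1) / I * R0 ^ 2) by nra.
  replace (16 * phi (INR M) * (I1 + INR M ^ 2 / phi 1) * (R0 ^ 2 / I))
    with (16 * phi (INR M) * ((I1 + INR M ^ 2 / phi 1) / I * R0 ^ 2))
    by (field; split; apply Rgt_not_eq; [lra | apply Hphi_pos; lra]).
  nra.
Qed.

Lemma scale_parameters_large R0 I : 4 <= R0 -> improper_int0 (sphi phi) R0 I ->
  exists J m, R0 <= scale_cover M m J /\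
    scale_cost (fun j => phi (INR M ^ j)) m J <=
      9 * (I1 * phi (INR M) + INR M ^ 2 * A + INR M ^ 4) * (R0 ^ 2 / I).
Proof.
  intros HR0 HI. assert (HMr := INR_M_ge_4).
  assert (HIp : 0 < I) by (apply (improper_int0_sphi_pos phi Hphi_pos Hphi_incr R0); auto; lra).
  destruct (exists_least_scale (INR M) R0 ltac:(lra) HR0) as [J [HJ [HJlo HJhi]]].
  destruct (exists_scale_cover M (fun j => phi (INR M ^ j)) J R0 ltac:(lia) HJ phi_M_pow_pos ltac:(lra))
    as [m [Hcov Hcost]].
  set (W := lsum (fun j => INR M ^ (2 * (j - 1)) / phi (INR M ^ j)) (seq 1 J)) in *.
  assert (HRJ : R0 <= INR M ^ (J + 1)).
  { replace (J + 1)%nat with (S (S (J - 1))) by lia. replace J with (S (J - 1)) in HJhi by lia.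
    simpl in *. nra. }
  assert (HIW := improper_int0_sphi_le_weights R0 I J ltac:(lra) HJ HRJ HI). fold W in HIW.
  assert (HW : 0 < W).
  { apply Rlt_le_trans with (INR M ^ (2 * (1 - 1)) / phi (INR M ^ 1)).
    - simpl. apply Rmult_lt_0_compat; [lra | apply Rinv_0_lt_compat, (phi_M_pow_pos 1)].
    - apply (lsum_term_le (fun j => INR M ^ (2 * (j - 1)) / phi (INR M ^ j))); [apply in_seq; lia|].
      intros j _. apply Rmult_le_pos; [apply pow_le; lra|].
      apply Rlt_le, Rinv_0_lt_compat, phi_M_pow_pos. }
  exists J, m. split; auto. eapply Rle_trans; [exact Hcost|].
  replace (9 * R0 ^ 2 / W) with (9 * (R0 ^ 2 / I) * (I / W))
    by (field; split; apply Rgt_not_eq; lra).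
  assert (HIK : I / W <= I1 * phi (INR M) + INR M ^ 2 * A + INR M ^ 4).
  { apply (Rmult_le_reg_r W); [lra|]. unfold Rdiv. rewrite Rmult_assoc, Rinv_l; lra. }
  assert (0 <= R0 ^ 2 / I) by (apply Rmult_le_pos; [nra | apply Rlt_le, Rinv_0_lt_compat; lra]).
  nra.
Qed.

Lemma scale_parameters : exists K1, forall R0 I, 1 <= R0 -> improper_int0 (sphi phi) R0 I ->
  exists J m, R0 <= scale_cover M m J /\ scale_cost (fun j => phi (INR M ^ j)) m J <= K1 * (R0 ^ 2 / I).
Proof.
  exists (Rmax (16 * phi (INR M) * (I1 + INR M ^ 2 / phi 1))
               (9 * (I1 * phi (INR M) + INR M ^ 2 * A + INR M ^ 4))).
  intros R0 I HR0 HI.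
  assert (HIp : 0 < I) by (apply (improper_int0_sphi_pos phi Hphi_pos Hphi_incr R0); auto).
  assert (HR : 0 <= R0 ^ 2 / I) by (apply Rmult_le_pos; [nra | apply Rlt_le, Rinv_0_lt_compat; lra]).
  destruct (Rlt_le_dec R0 4) as [Hsmall|Hbig].
  - destruct (scale_parameters_small R0 I ltac:(lra) HI) as [Hcov Hcost].
    exists 1%nat, (fun _ => 4%nat). split; auto. eapply Rle_trans; [exact Hcost|].
    apply Rmult_le_compat_r; [auto | apply Rmax_l].
  - destruct (scale_parameters_large R0 I Hbig HI) as [J [m [Hcov Hcost]]].
    exists J, m. split; auto. eapply Rle_trans; [exact Hcost|].
    apply Rmult_le_compat_r; [auto | apply Rmax_r].
Qed.

End ScaleChoice.

(** * Doubling of [phi] *)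

Section Doubling.
Variable phi : R -> R.
Hypothesis Hphi_pos : forall t, 0 < t -> 0 < phi t.
Hypothesis Hphi_incr : forall s t, 0 < s -> s <= t -> phi s <= phi t.

Lemma regularly_varying_doubling gamma : regularly_varying phi gamma ->
  exists Kd, 1 <= Kd /\ forall t, 1 <= t -> phi (2 * t) <= Kd * phi t.
Proof.
  intros Hrv. destruct (Hrv 2 ltac:(lra) 1 ltac:(lra)) as [T HT].
  set (T' := Rmax T 1).
  assert (HT1 : T <= T') by apply Rmax_l. assert (HT2 : 1 <= T') by apply Rmax_r.
  set (K := Rmax 1 (Rmax (Rpower 2 gamma + 1) (phi (2 * T') / phi 1))).
  exists K. split; [apply Rmax_l|]. intros t Ht.
  assert (Hp1 : 0 < phi 1) by (apply Hphi_pos; lra). assert (Hpt : 0 < phi t) by (apply Hphi_pos; lra).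
  assert (HK1 : Rpower 2 gamma + 1 <= K) by (unfold K; eapply Rle_trans; [apply Rmax_l | apply Rmax_r]).
  assert (HK2 : phi (2 * T') / phi 1 <= K) by (unfold K; eapply Rle_trans; [apply Rmax_r | apply Rmax_r]).
  destruct (Rlt_le_dec T t) as [Hlt|Hle].
  - specialize (HT t Hlt). apply Rabs_def2 in HT as [HT _].
    apply Rlt_le, (Rmult_lt_reg_r (/ phi t)); [apply Rinv_0_lt_compat; auto|].
    rewrite Rmult_assoc, Rinv_r, Rmult_1_r; lra.
  - assert (phi (2 * t) <= phi (2 * T')) by (apply Hphi_incr; lra).
    assert (phi 1 <= phi t) by (apply Hphi_incr; lra).
    assert (phi (2 * T') <= K * phi 1).
    { apply (Rmult_le_reg_r (/ phi 1)); [apply Rinv_0_lt_compat; auto|].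
      rewrite Rmult_assoc, Rinv_r, Rmult_1_r; lra. }
    assert (1 <= K) by apply Rmax_l. nra.
Qed.

Variable Kd : R.
Hypothesis HKd : 1 <= Kd.
Hypothesis Hdb : forall t, 1 <= t -> phi (2 * t) <= Kd * phi t.

Lemma doubling_pow2 k t : 1 <= t -> phi (2 ^ k * t) <= Kd ^ k * phi t.
Proof.
  revert t. induction k; intros t Ht; simpl.
  - rewrite !Rmult_1_l. lra.
  - rewrite Rmult_assoc. eapply Rle_trans; [apply Hdb|].
    + assert (1 <= 2 ^ k) by (apply pow_R1_Rle; lra). nra.
    + rewrite Rmult_assoc. apply Rmult_le_compat_l; [lra | auto].
Qed.

Lemma exists_pow2_small_ratio d t : 0 < d -> 0 < t ->
  exists k : nat, (2 <= k)%nat /\ Rpower (4 / 2 ^ k) d <= t.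
Proof.
  intros Hd Ht. set (c := Rabs (ln 4 - ln t / d)).
  exists (ceil_nat (2 * c) + 2)%nat. split; [lia|].
  set (k := (ceil_nat (2 * c) + 2)%nat).
  assert (Hc : 0 <= c) by apply Rabs_pos.
  assert (Hk : 2 * c < INR k).
  { unfold k. rewrite plus_INR. assert (H := ceil_nat_spec (2 * c) ltac:(lra)). simpl. lra. }
  assert (Hl2 := ln_lt_2).
  assert (H1 : ln 4 - ln t / d < INR k * ln 2) by (assert (ln 4 - ln t / d <= c) by apply Rle_abs; nra).
  unfold Rpower. rewrite <- (exp_ln t) by auto.
  left. apply exp_increasing.
  assert (Hp : 0 < 2 ^ k) by (apply pow_lt; lra).
  unfold Rdiv. rewrite ln_mult, ln_Rinv, ln_pow; try lra; try apply Rinv_0_lt_compat; auto.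
  assert (d * (ln 4 - ln t / d) < d * (INR k * ln 2)) by (apply Rmult_lt_compat_l; auto).
  replace (d * (ln 4 - ln t / d)) with (d * ln 4 - ln t) in H by (field; lra).
  nra.
Qed.

(* The scale ratio [M] is a power of 2, so that the doubling bound iterates to [phi (M t) <= A phi t]. *)
Lemma exists_scale_ratio d t : 0 < d -> 0 < t -> exists (M : nat) (A : R),
  (4 <= M)%nat /\ Rpower (4 / INR M) d <= t /\
  forall j, (1 <= j)%nat -> phi (INR M ^ j) <= A * phi (INR M ^ (j - 1)).
Proof.
  intros Hd Ht. destruct (exists_pow2_small_ratio d t Hd Ht) as [k [Hk2 Hkpow]].
  assert (HMr : INR (2 ^ k) = 2 ^ k) by (rewrite pow_INR; reflexivity).
  exists (2 ^ k)%nat, (Kd ^ k). split; [|split].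
  - replace 4%nat with (2 ^ 2)%nat by reflexivity. apply Nat.pow_le_mono_r; lia.
  - rewrite HMr. auto.
  - intros j Hj. rewrite HMr. destruct j as [|j]; [lia|]. rewrite Nat.sub_succ, Nat.sub_0_r.
    simpl. apply doubling_pow2, pow_R1_Rle, pow_R1_Rle. lra.
Qed.

(* The stepping-stone weight [4 / (phi(X) N)] of a shell of radius [X] and cardinality
   [N >~ X^d] is dominated by [mu] on that shell. *)
Lemma shell_weight_le_mu d (a1 cz X N t mu : R) : 0 < d -> 0 < a1 -> 0 < cz -> 1 <= X -> 0 <= t <= X ->
  cz * Rpower X d <= N -> a1 / (phi (1 + t) * Rpower (1 + t) d) <= mu ->
  4 / (phi X * N) <= 4 * Kd * Rpower 2 d / (cz * a1) * mu.
Proof.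
  intros Hd Ha1 Hcz HX1 Ht HN Hmu.
  assert (Hp2 : 0 < Rpower 2 d) by apply Rpower_pos.
  assert (HpX : 0 < phi X) by (apply Hphi_pos; lra).
  assert (HpN : 0 < phi (1 + t)) by (apply Hphi_pos; lra).
  assert (Hph : phi (1 + t) <= Kd * phi X)
    by (apply Rle_trans with (phi (2 * X)); [apply Hphi_incr | apply Hdb]; lra).
  assert (HRp : Rpower (1 + t) d <= Rpower 2 d * Rpower X d)
    by (rewrite <- Rpower_mul by lra; apply Rle_Rpower_l; lra).
  assert (HRpN : 0 < Rpower (1 + t) d) by apply Rpower_pos.
  assert (HRpX : 0 < Rpower X d) by apply Rpower_pos.
  set (K0 := 4 * Kd * Rpower 2 d / (cz * a1)).
  assert (HK0 : 0 <= K0)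
    by (apply Rmult_le_pos; [nra | apply Rlt_le, Rinv_0_lt_compat; nra]).
  apply Rle_trans with (4 / (phi X * (cz * Rpower X d))).
  { unfold Rdiv. apply Rmult_le_compat_l; [lra|].
    apply Rinv_le_contravar; [apply Rmult_lt_0_compat; [lra | apply Rmult_lt_0_compat; lra]|].
    apply Rmult_le_compat_l; lra. }
  apply Rle_trans with (K0 * (a1 / (phi (1 + t) * Rpower (1 + t) d))); [|apply Rmult_le_compat_l; auto].
  replace (4 / (phi X * (cz * Rpower X d)))
    with (K0 * (a1 / ((Kd * phi X) * (Rpower 2 d * Rpower X d))))
    by (unfold K0; field; repeat split; lra).
  apply Rmult_le_compat_l; auto. unfold Rdiv. apply Rmult_le_compat_l; [lra|].
  apply Rinv_le_contravar; [nra|]. apply Rmult_le_compat; lra.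
Qed.

End Doubling.

(** * Words, detours and shells in the group *)

(* Counting the shell [(2Y, MY - Y]]: the ball of radius [2Y] is negligible against that of
   radius [MY - Y] once [M] is large. *)
Lemma shell_volume_arith (c1 c2 d Mr Y : R) : 0 < d -> 0 < c1 -> 0 < c2 -> 4 <= Mr -> 1 <= Y ->
  Rpower (4 / Mr) d <= c1 / (2 * c2) ->
  c1 * Rpower (1/2) d / 2 * Rpower (Mr * Y) d <= c1 * Rpower (Mr * Y - Y) d - c2 * Rpower (2 * Y) d.
Proof.
  intros Hd Hc1 Hc2 HMr HY Hratio.
  assert (Hk : c2 * Rpower (4 / Mr) d <= c1 / 2).
  { apply (Rmult_le_compat_l c2) in Hratio; [|lra].
    replace (c2 * (c1 / (2 * c2))) with (c1 / 2) in Hratio by (field; lra). exact Hratio. }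
  assert (HRA : Rpower (Mr * Y) d * Rpower (1/2) d <= Rpower (Mr * Y - Y) d).
  { rewrite <- Rpower_mul by nra. apply Rle_Rpower_l; [lra|]. nra. }
  assert (HRB : Rpower (2 * Y) d = Rpower (Mr * Y) d * Rpower (1/2) d * Rpower (4 / Mr) d).
  { rewrite <- !Rpower_mul; try nra.
    - f_equal. field. lra.
    - unfold Rdiv. apply Rmult_lt_0_compat; [lra | apply Rinv_0_lt_compat; lra]. }
  assert (Hp : 0 < Rpower (Mr * Y) d * Rpower (1/2) d) by (apply Rmult_lt_0_compat; apply Rpower_pos).
  rewrite HRB.
  assert (Rpower (Mr * Y) d * Rpower (1/2) d * (c2 * Rpower (4 / Mr) d) <=
          Rpower (Mr * Y) d * Rpower (1/2) d * (c1 / 2)) by (apply Rmult_le_compat_l; lra).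
  assert (c1 * (Rpower (Mr * Y) d * Rpower (1/2) d) <= c1 * Rpower (Mr * Y - Y) d)
    by (apply Rmult_le_compat_l; lra).
  lra.
Qed.

Section Group.
Variable G : Type.
Variables (mul : G -> G -> G) (inv : G -> G) (e : G).
Hypothesis Hgrp : is_group mul inv e.
Variable Sg : list G.
Hypothesis HS_sym : forall s, In s Sg -> In (inv s) Sg.

Lemma mulA x y z : mul (mul x y) z = mul x (mul y z). Proof. apply Hgrp. Qed.
Lemma mul1g x : mul e x = x. Proof. apply Hgrp. Qed.
Lemma mulg1 x : mul x e = x. Proof. apply Hgrp. Qed.
Lemma mulVg x : mul (inv x) x = e. Proof. apply Hgrp. Qed.
Lemma mulgV x : mul x (inv x) = e. Proof. apply Hgrp. Qed.

Lemma inv_unique x y : mul x y = e -> y = inv x.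
Proof. intros H. rewrite <- (mul1g y), <- (mulVg x), mulA, H, mulg1. auto. Qed.

Lemma invMg a b : inv (mul a b) = mul (inv b) (inv a).
Proof. symmetry. apply inv_unique. rewrite mulA, <- (mulA b), mulgV, mul1g, mulgV. auto. Qed.

Lemma invg1 : inv e = e.
Proof. symmetry. apply inv_unique, mul1g. Qed.

Lemma invgK a : inv (inv a) = a.
Proof. symmetry. apply inv_unique, mulVg. Qed.

Lemma mulIg u : Injective (fun x => mul x u).
Proof. intros x y H. rewrite <- (mulg1 x), <- (mulg1 y), <- (mulgV u), <- !mulA, H. auto. Qed.

Definition wfold (w : list G) := fold_right mul e w.

Lemma wfold_app w1 w2 : wfold (w1 ++ w2) = mul (wfold w1) (wfold w2).
Proof. induction w1; simpl; [rewrite mul1g | unfold wfold in *; simpl; rewrite IHw1, mulA]; auto. Qed.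

Lemma wfold_rev_inv w : wfold (rev (map inv w)) = inv (wfold w).
Proof.
  induction w; simpl; [symmetry; apply invg1|].
  rewrite wfold_app, IHw. unfold wfold; simpl. rewrite mulg1, invMg. auto.
Qed.

Definition wle h n := word_le mul e Sg h n.
Definition wlen h n := word_length mul e Sg h n.

Lemma wle_mul a b n m : wle a n -> wle b m -> wle (mul a b) (n + m).
Proof.
  intros [w [H1 [H2 H3]]] [v [K1 [K2 K3]]]. exists (w ++ v). repeat split.
  - rewrite length_app; lia.
  - apply Forall_app; auto.
  - change (wfold (w ++ v) = mul a b). rewrite wfold_app. unfold wfold; congruence.
Qed.

Lemma wle_inv a n : wle a n -> wle (inv a) n.
Proof.
  intros [w [H1 [H2 H3]]]. exists (rev (map inv w)). repeat split.
  - rewrite length_rev, length_map; auto.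
  - apply Forall_rev, Forall_map. eapply Forall_impl; [|exact H2]. simpl; auto.
  - change (wfold (rev (map inv w)) = inv a). rewrite wfold_rev_inv. unfold wfold; congruence.
Qed.

Lemma wlen_of_wle x k : wle x k -> exists n, wlen x n /\ (n <= k)%nat.
Proof.
  intros Hk. destruct (exists_least_nat (wle x) (ex_intro _ k Hk)) as [n [Hn Hmin]].
  exists n. split; [split; auto|].
  - intros m Hm. destruct (Nat.lt_ge_cases m n) as [Hlt|]; auto. exfalso; eapply Hmin; eauto.
  - destruct (Nat.lt_ge_cases k n) as [Hlt|]; auto. exfalso; eapply Hmin; eauto.
Qed.

Lemma wlen_unique x n m : wlen x n -> wlen x m -> n = m.
Proof. intros [H1 H2] [K1 K2]. specialize (H2 m K1). specialize (K2 n H1). lia. Qed.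

Lemma wlen_wle x n : wlen x n -> wle x n.
Proof. intros [H _]; auto. Qed.

Fixpoint words_upto (k : nat) : list (list G) :=
  match k with
  | O => [[]]
  | S k' => [] :: flat_map (fun s => map (cons s) (words_upto k')) Sg
  end.

Lemma words_upto_spec k w :
  In w (words_upto k) <-> (length w <= k)%nat /\ Forall (fun s => In s Sg) w.
Proof.
  revert w; induction k; intros w; simpl.
  - split; [intros [<-|[]]; simpl; auto|]. intros [Hl _]; destruct w; simpl in *; auto; lia.
  - split.
    + intros [<-|H]; [simpl; split; [lia | auto]|].
      apply in_flat_map in H as [s [Hs H]]. apply in_map_iff in H as [w' [<- H]].
      apply IHk in H as [H1 H2]. simpl; split; [lia | constructor; auto].
    + intros [Hl Hf]. destruct w as [|s w]; [left; auto|]. right. apply in_flat_map.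
      inversion Hf; subst. exists s. split; auto. apply in_map, IHk. simpl in Hl; split; auto; lia.
Qed.

Lemma exists_ball_list k :
  exists L, NoDup L /\ forall x, In x L <-> exists n, wlen x n /\ (n <= k)%nat.
Proof.
  destruct (exists_NoDup_filter (map wfold (words_upto k)) (fun _ => True)) as [L [HL HLi]].
  exists L. split; auto. intros x. rewrite HLi. split.
  - intros [H _]. apply in_map_iff in H as [w [<- Hw]]. apply words_upto_spec in Hw.
    apply wlen_of_wle. exists w; destruct Hw; repeat split; auto.
  - intros [n [Hn Hk]]. split; auto. destruct (wlen_wle _ _ Hn) as [w [H1 [H2 H3]]].
    apply in_map_iff. exists w. split; auto. apply words_upto_spec; split; auto; lia.
Qed.

Lemma exists_shell_list lo hi :
  exists L, NoDup L /\ forall x, In x L <-> exists n, wlen x n /\ (lo < n <= hi)%nat.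
Proof.
  destruct (exists_ball_list hi) as [B [HB HBi]].
  destruct (exists_NoDup_filter B (fun x => exists n, wlen x n /\ (lo < n)%nat)) as [L [HL HLi]].
  exists L. split; auto. intros x. rewrite HLi, HBi. split.
  - intros [[n [Hn Hn']] [n' [Hn2 Hn2']]]. rewrite (wlen_unique _ _ _ Hn2 Hn) in Hn2'.
    exists n; split; auto; lia.
  - intros [n [Hn Hn']]. split; exists n; split; auto; lia.
Qed.

Lemma shell_inv_mul (M j : nat) (g z : G) nz :
  wle g (M ^ (j - 1)) -> wlen z nz -> (2 * M ^ (j - 1) < nz <= M ^ j - M ^ (j - 1))%nat ->
  exists m, wlen (mul (inv z) g) m /\ (M ^ (j - 1) < m <= M ^ j)%nat.
Proof.
  intros Hg Hz [H1 H2].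
  assert (Hu : wle (mul (inv z) g) (nz + M ^ (j - 1))).
  { apply wle_mul; auto. apply wle_inv, wlen_wle; auto. }
  destruct (wlen_of_wle _ _ Hu) as [m [Hm Hmle]]. exists m. split; auto. split; [|lia].
  assert (Hz' : wle z (M ^ (j - 1) + m)).
  { replace z with (mul g (inv (mul (inv z) g))).
    - apply wle_mul, wle_inv, wlen_wle; auto.
    - rewrite invMg, invgK, <- mulA, mulgV, mul1g. auto. }
  destruct Hz as [_ Hz]. specialize (Hz _ Hz'). lia.
Qed.

Definition chain_energy (F : G -> R) (fl : list (G * G * R)) :=
  lsum (fun t => snd t * (F (mul (fst (fst t)) (snd (fst t))) - F (fst (fst t)))^2) fl.
Definition chain_load (Gf : G -> R) (fl : list (G * G * R)) :=
  lsum (fun t => snd t * Gf (snd (fst t))) fl.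

Lemma chain_energy_app F l1 l2 : chain_energy F (l1 ++ l2) = chain_energy F l1 + chain_energy F l2.
Proof. apply lsum_app. Qed.

Lemma chain_energy_nonneg F fl : (forall t, In t fl -> 0 <= snd t) -> 0 <= chain_energy F fl.
Proof. intros H. apply lsum_nonneg. intros t Ht. apply Rmult_le_pos; auto. apply pow2_ge_0. Qed.

(* A chain controlling [F h - F e] for all [F] controls every translate [f (x h) - f x]:
   apply the bound to [F := f (x _)], sum over [x], and note that each increment [(y, z)]
   then becomes a right translation by [z] over a duplicate-free set of points [y = x a]. *)
Lemma translate_energy_le_of_chain (f mu : G -> R) (h : G) (fl : list (G * G * R))
  (Wf K : R) (Wl : list G) (Ssum : R) :
  (forall t, In t fl -> 0 <= snd t) -> 0 <= Wf -> 0 <= K ->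
  (forall F, (F h - F e)^2 <= Wf * chain_energy F fl) ->
  NoDup Wl ->
  (forall Gf, (forall w, 0 <= Gf w) -> chain_load Gf fl <= K * lsum (fun w => mu w * Gf w) Wl) ->
  sums_to (fun p : G * G => (f (mul (fst p) (snd p)) - f (fst p))^2 * mu (snd p)) Ssum ->
  forall l, NoDup l -> lsum (fun x => (f (mul x h) - f x)^2) l <= Wf * K * Ssum.
Proof.
  intros Hc HWf HK HA HWl HB Hs l Hl.
  set (q := fun y z => (f (mul y z) - f y)^2).
  assert (Hq : forall y z, 0 <= q y z) by (intros; apply pow2_ge_0).
  destruct (exists_NoDup_filter (flat_map (fun t => map (fun x => mul x (fst (fst t))) l) fl)
              (fun _ => True)) as [Y [HY HYi]].
  apply Rle_trans with (lsum (fun x => Wf * chain_energy (fun g => f (mul x g)) fl) l).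
  { apply lsum_le. intros x _. specialize (HA (fun g => f (mul x g))). simpl in HA.
    rewrite mulg1 in HA. exact HA. }
  rewrite lsum_scal. unfold chain_energy. rewrite lsum_swap.
  apply Rle_trans with (Wf * lsum (fun t => snd t * lsum (fun y => q y (snd (fst t))) Y) fl).
  { apply Rmult_le_compat_l; auto. apply lsum_le. intros t Ht.
    rewrite lsum_scal. apply Rmult_le_compat_l; auto.
    apply Rle_trans with (lsum (fun y => q y (snd (fst t))) (map (fun x => mul x (fst (fst t))) l)).
    - rewrite lsum_map. right. apply lsum_ext. intros x _. unfold q. rewrite mulA. auto.
    - apply lsum_le_incl; auto.
      + apply Injective_map_NoDup; auto. apply mulIg.
      + intros y Hy. apply HYi. split; auto. apply in_flat_map. exists t; auto. }
  apply Rle_trans with (Wf * lsum (fun y => K * lsum (fun w => mu w * q y w) Wl) Y).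
  { apply Rmult_le_compat_l; auto.
    replace (lsum (fun t => snd t * lsum (fun y => q y (snd (fst t))) Y) fl) with
      (lsum (fun y => chain_load (q y) fl) Y).
    - apply lsum_le. intros y _. apply HB. intros; apply Hq.
    - unfold chain_load. rewrite lsum_swap. apply lsum_ext. intros t _. rewrite lsum_scal; auto. }
  rewrite lsum_scal, <- Rmult_assoc. apply Rmult_le_compat_l; [apply Rmult_le_pos; auto|].
  replace (lsum (fun y => lsum (fun w => mu w * q y w) Wl) Y) with
    (lsum (fun p : G * G => (f (mul (fst p) (snd p)) - f (fst p))^2 * mu (snd p)) (list_prod Y Wl)).
  - destruct Hs as [Hub _]. apply Hub. exists (list_prod Y Wl). split; auto.
    apply NoDup_list_prod; auto.
  - rewrite lsum_list_prod. apply lsum_ext. intros y _. apply lsum_ext.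
    intros w _. simpl. unfold q. ring.
Qed.

(* Passing from [a] to [a g] through [a z], averaged over the stepping stones [z] in [Zl]. *)
Definition detour (a g : G) (Zl : list G) (k : R) : list (G * G * R) :=
  flat_map (fun z => [((a, z), 2 * k / INR (length Zl));
                      ((mul a z, mul (inv z) g), 2 * k / INR (length Zl))]) Zl.

Lemma detour_weights_nonneg a g Zl k : 0 <= k -> forall t, In t (detour a g Zl k) -> 0 <= snd t.
Proof.
  intros Hk t Ht. apply in_flat_map in Ht as [z [Hz Ht]].
  assert (0 <= 2 * k / INR (length Zl)).
  { unfold Rdiv. apply Rmult_le_pos; [lra|]. apply Rlt_le, Rinv_0_lt_compat.
    destruct Zl; [destruct Hz | apply lt_0_INR; simpl; lia]. }
  destruct Ht as [<-|[<-|[]]]; simpl; auto.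
Qed.

Lemma detour_energy_ge a g Zl k F : Zl <> [] -> 0 <= k ->
  k * (F (mul a g) - F a)^2 <= chain_energy F (detour a g Zl k).
Proof.
  intros Hz Hk. set (N := INR (length Zl)).
  assert (HN : 0 < N) by (unfold N; destruct Zl; [congruence | apply lt_0_INR; simpl; lia]).
  assert (HkN : 0 <= k / N)
    by (unfold Rdiv; apply Rmult_le_pos; [lra | apply Rlt_le, Rinv_0_lt_compat; lra]).
  unfold chain_energy, detour. rewrite lsum_flat_map.
  apply Rle_trans with (lsum (fun _ : G => k / N * (F (mul a g) - F a)^2) Zl).
  - rewrite lsum_const. fold N. right. field. lra.
  - apply lsum_le. intros z _. rewrite !lsum_cons, lsum_nil. simpl fst; simpl snd.
    rewrite (mulA a z), <- (mulA z), mulgV, mul1g. fold N.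
    set (x := F (mul a z) - F a). set (y := F (mul a g) - F (mul a z)).
    replace (F (mul a g) - F a) with (x + y) by (unfold x, y; ring).
    replace (2 * k / N) with (2 * (k / N)) by (field; lra).
    assert ((x + y)^2 <= 2 * x^2 + 2 * y^2) by (assert (0 <= (x - y)^2) by apply pow2_ge_0; nra).
    nra.
Qed.

Lemma detour_load_le a g Zl k (Ul : list G) Gf : 0 <= k -> NoDup Zl -> incl Zl Ul ->
  (forall z, In z Zl -> In (mul (inv z) g) Ul) -> (forall w, 0 <= Gf w) ->
  chain_load Gf (detour a g Zl k) <= 4 * k / INR (length Zl) * lsum Gf Ul.
Proof.
  intros Hk HZ H1 H2 HG. unfold chain_load, detour. rewrite lsum_flat_map.
  set (c := 2 * k / INR (length Zl)).
  assert (Hc : 0 <= c).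
  { unfold c, Rdiv. apply Rmult_le_pos; [lra|]. destruct (length Zl).
    - simpl. rewrite Rinv_0; lra.
    - apply Rlt_le, Rinv_0_lt_compat, lt_0_INR; lia. }
  replace (4 * k / INR (length Zl)) with (2 * c) by (unfold c, Rdiv; ring).
  apply Rle_trans with (lsum (fun z => c * Gf z) Zl + lsum (fun z => c * Gf (mul (inv z) g)) Zl).
  - rewrite <- lsum_plus. right. apply lsum_ext. intros z _.
    rewrite !lsum_cons, lsum_nil. simpl. ring.
  - rewrite !lsum_scal.
    assert (lsum Gf Zl <= lsum Gf Ul) by (apply lsum_le_incl; auto).
    assert (lsum (fun z => Gf (mul (inv z) g)) Zl <= lsum Gf Ul).
    { rewrite <- (lsum_map Gf (fun z => mul (inv z) g)). apply lsum_le_incl; auto.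
      - apply Injective_map_NoDup; auto. intros x y Hxy. apply mulIg in Hxy.
        rewrite <- (invgK x), Hxy, invgK; auto.
      - intros w Hw. apply in_map_iff in Hw as [z [<- Hz]]. auto. }
    nra.
Qed.

Section DetourPath.
Variable Zf : nat -> list G.

(* A path is a list of pieces [(g, j, w)]: a group element [g] crossed at scale [j]
   through the stepping stones [Zf j], with Cauchy-Schwarz weight [w]. *)
Fixpoint detour_path (a : G) (ps : list (G * nat * R)) : list (G * G * R) :=
  match ps with
  | [] => []
  | p :: rest => detour a (fst (fst p)) (Zf (snd (fst p))) (/ snd p)
                  ++ detour_path (mul a (fst (fst p))) rest
  end.

Definition path_prod (ps : list (G * nat * R)) := fold_right (fun p acc => mul (fst (fst p)) acc) e ps.

Lemma detour_path_weights_nonneg a ps : (forall p, In p ps -> 0 < snd p) ->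
  forall t, In t (detour_path a ps) -> 0 <= snd t.
Proof.
  revert a; induction ps as [|p ps IH]; intros a Hp t Ht; simpl in Ht; [contradiction|].
  apply in_app_or in Ht as [Ht|Ht].
  - eapply detour_weights_nonneg; [|exact Ht]. apply Rlt_le, Rinv_0_lt_compat, Hp; left; auto.
  - eapply IH; [|exact Ht]. intros; apply Hp; right; auto.
Qed.

Lemma detour_path_energy_ge ps : (forall p, In p ps -> 0 < snd p /\ Zf (snd (fst p)) <> []) ->
  forall F a, (F (mul a (path_prod ps)) - F a)^2 <= lsum snd ps * chain_energy F (detour_path a ps).
Proof.
  induction ps as [|p ps IH]; intros Hp F a.
  - cbn [path_prod fold_right lsum]. rewrite mulg1, Rminus_diag. lra.
  - cbn [detour_path path_prod fold_right]. fold (path_prod ps).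
    rewrite lsum_cons, chain_energy_app.
    destruct (Hp p (or_introl eq_refl)) as [Hw HZ].
    assert (Hps : forall p, In p ps -> 0 < snd p /\ Zf (snd (fst p)) <> [])
      by (intros; apply Hp; right; auto).
    specialize (IH Hps F (mul a (fst (fst p)))). rewrite mulA in IH.
    set (D := F (mul a (fst (fst p))) - F a).
    set (Sv := F (mul a (mul (fst (fst p)) (path_prod ps))) - F (mul a (fst (fst p)))).
    replace (F (mul a (mul (fst (fst p)) (path_prod ps))) - F a) with (D + Sv) by (unfold D, Sv; ring).
    assert (HW : 0 <= lsum snd ps) by (apply lsum_nonneg; intros; left; apply Hps; auto).
    assert (HT : 0 <= chain_energy F (detour_path (mul a (fst (fst p))) ps))
      by (apply chain_energy_nonneg, detour_path_weights_nonneg; intros; apply Hps; auto).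
    assert (Hst := detour_energy_ge a (fst (fst p)) (Zf (snd (fst p))) (/ snd p) F HZ
                     (Rlt_le _ _ (Rinv_0_lt_compat _ Hw))).
    fold D in Hst. fold Sv in IH.
    eapply Rle_trans; [exact (sq_add_le_weighted D Sv _ _ _ Hw HW HT IH)|].
    apply Rmult_le_compat_l; [lra|]. unfold Rdiv. rewrite Rmult_comm. lra.
Qed.

Variable Uf : nat -> list G.

Lemma detour_path_load_le ps Gf : (forall w, 0 <= Gf w) ->
  (forall p, In p ps -> 0 < snd p /\ NoDup (Zf (snd (fst p))) /\
     incl (Zf (snd (fst p))) (Uf (snd (fst p))) /\
     (forall z, In z (Zf (snd (fst p))) -> In (mul (inv z) (fst (fst p))) (Uf (snd (fst p))))) ->
  forall a, chain_load Gf (detour_path a ps) <=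
     lsum (fun p => 4 * / snd p / INR (length (Zf (snd (fst p)))) * lsum Gf (Uf (snd (fst p)))) ps.
Proof.
  intros HG; induction ps as [|p ps IH]; intros Hp a.
  - simpl. lra.
  - cbn [detour_path]. unfold chain_load in *. rewrite lsum_app, lsum_cons.
    destruct (Hp p (or_introl eq_refl)) as [Hw [HN [H1 H2]]].
    apply Rplus_le_compat.
    + apply detour_load_le; auto. apply Rlt_le, Rinv_0_lt_compat; auto.
    + apply IH. intros; apply Hp; right; auto.
Qed.

End DetourPath.

Definition pieces_length (sz : list (nat * nat * R)) := list_sum (map (fun s => fst (fst s)) sz).

Definition fits_piece (p : G * nat * R) (s : nat * nat * R) :=
  snd (fst p) = snd (fst s) /\ snd p = snd s /\ wle (fst (fst p)) (fst (fst s)).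

Lemma split_word_into_pieces sz : forall w, Forall (fun s => In s Sg) w ->
  (length w <= pieces_length sz)%nat ->
  exists ps, Forall2 fits_piece ps sz /\ path_prod ps = wfold w.
Proof.
  unfold pieces_length.
  induction sz as [|s sz IH]; intros w Hw Hl; simpl map in *; simpl list_sum in *.
  - exists []. split; [constructor|]. destruct w; simpl in *; [auto | lia].
  - rewrite <- (firstn_skipn (fst (fst s)) w) in Hw. apply Forall_app in Hw as [Hw1 Hw2].
    destruct (IH (skipn (fst (fst s)) w)) as [ps [H1 H2]]; auto.
    { rewrite length_skipn. lia. }
    exists ((wfold (firstn (fst (fst s)) w), snd (fst s), snd s) :: ps). split.
    + constructor; auto. repeat split; auto.
      exists (firstn (fst (fst s)) w). repeat split; auto. rewrite length_firstn; lia.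
    + cbn [path_prod fold_right fst]. fold (path_prod ps).
      rewrite H2, <- wfold_app, firstn_skipn. auto.
Qed.

Definition scale_pieces (M : nat) (m : nat -> nat) (psi : nat -> R) (J : nat) : list (nat * nat * R) :=
  flat_map (fun j => repeat ((M ^ (j - 1))%nat, j, psi j * INR (m j)) (m j)) (seq 1 J).

Lemma lsum_scale_pieces M m psi J (F : nat * nat * R -> R) :
  lsum F (scale_pieces M m psi J) =
  lsum (fun j => INR (m j) * F ((M ^ (j - 1))%nat, j, psi j * INR (m j))) (seq 1 J).
Proof. unfold scale_pieces. rewrite lsum_flat_map. apply lsum_ext. intros; apply lsum_repeat. Qed.

Lemma INR_pieces_length_scale M m psi J :
  INR (pieces_length (scale_pieces M m psi J)) = scale_cover M m J.
Proof.
  transitivity (lsum (fun s => INR (fst (fst s))) (scale_pieces M m psi J)).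
  - unfold pieces_length. induction (scale_pieces M m psi J) as [|s sz IH]; auto.
    simpl map; simpl list_sum. rewrite plus_INR, IH. reflexivity.
  - rewrite lsum_scale_pieces. apply lsum_ext. intros j _. simpl. rewrite pow_INR. reflexivity.
Qed.

Lemma in_scale_pieces M m psi J s : In s (scale_pieces M m psi J) ->
  exists j, (1 <= j <= J)%nat /\ (1 <= m j)%nat /\ s = ((M ^ (j - 1))%nat, j, psi j * INR (m j)).
Proof.
  intros H. apply in_flat_map in H as [j [Hj Hs]]. apply in_seq in Hj. exists j.
  apply repeat_spec in Hs as Hs'. destruct (m j) eqn:E; [destruct Hs|].
  split; [lia | split; [lia | auto]].
Qed.

Lemma fits_scale_piece M m psi J ps p : Forall2 fits_piece ps (scale_pieces M m psi J) -> In p ps ->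
  exists j, (1 <= j <= J)%nat /\ (1 <= m j)%nat /\
    snd (fst p) = j /\ snd p = psi j * INR (m j) /\ wle (fst (fst p)) (M ^ (j - 1)).
Proof.
  intros Hps Hp. destruct (Forall2_in_l _ _ _ _ Hps Hp) as [s [Hs [E1 [E2 E3]]]].
  destruct (in_scale_pieces _ _ _ _ _ Hs) as [j [Hj [Hmj ->]]]. exists j. auto.
Qed.

Section Multiscale.
Variable M : nat.
Hypothesis HM : (2 <= M)%nat.
Variables Zf Uf : nat -> list G.
Hypothesis HZ : forall j, (1 <= j)%nat -> NoDup (Zf j) /\ Zf j <> [] /\
  forall z, In z (Zf j) -> exists nz, wlen z nz /\ (2 * M ^ (j - 1) < nz <= M ^ j - M ^ (j - 1))%nat.
Hypothesis HU : forall j, NoDup (Uf j) /\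
  forall w, In w (Uf j) <-> exists n, wlen w n /\ (M ^ (j - 1) < n <= M ^ j)%nat.

Lemma NoDup_flat_map_shells a k : (1 <= a)%nat -> NoDup (flat_map Uf (seq a k)).
Proof.
  revert a; induction k; intros a Ha; simpl; [constructor|].
  apply NoDup_app; [apply HU | apply IHk; lia|].
  intros w H1 H2. apply in_flat_map in H2 as [j [Hj H2]]. apply in_seq in Hj.
  apply HU in H1 as [n [Hn Hn']]. apply HU in H2 as [n' [Hn2 Hn2']].
  rewrite (wlen_unique _ _ _ Hn2 Hn) in Hn2'.
  assert (M ^ a <= M ^ (j - 1))%nat by (apply Nat.pow_le_mono_r; lia). lia.
Qed.

Variables (mu : G -> R) (m : nat -> nat) (psi : nat -> R) (J : nat) (K0 : R).
Hypothesis Hpsi : forall j, (1 <= j <= J)%nat -> 0 < psi j.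
Hypothesis Hmu_lb : forall j w, (1 <= j <= J)%nat -> In w (Uf j) ->
  4 / (psi j * INR (length (Zf j))) <= K0 * mu w.

Lemma scale_pieces_load_le ps Gf : (forall w, 0 <= Gf w) ->
  Forall2 fits_piece ps (scale_pieces M m psi J) ->
  lsum (fun p => 4 * / snd p / INR (length (Zf (snd (fst p)))) * lsum Gf (Uf (snd (fst p)))) ps <=
  K0 * lsum (fun w => mu w * Gf w) (flat_map Uf (seq 1 J)).
Proof.
  intros HG Hps.
  rewrite (Forall2_lsum fits_piece _
    (fun s => 4 * / snd s / INR (length (Zf (snd (fst s)))) * lsum Gf (Uf (snd (fst s)))) ps _ Hps).
  2:{ intros a b [E1 [E2 _]]. rewrite E1, E2. auto. }
  rewrite lsum_scale_pieces, lsum_flat_map, <- lsum_scal.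
  apply lsum_le. intros j Hj. apply in_seq in Hj. simpl fst; simpl snd.
  assert (HNj : 0 < INR (length (Zf j))).
  { destruct (HZ j) as [_ [HZ2 _]]; [lia|]. destruct (Zf j); [congruence|]. apply lt_0_INR; simpl; lia. }
  assert (Hp := Hpsi j ltac:(lia)).
  assert (HX : 0 <= lsum Gf (Uf j)) by (apply lsum_nonneg; auto).
  apply Rle_trans with (4 / (psi j * INR (length (Zf j))) * lsum Gf (Uf j)).
  - destruct (m j) eqn:E.
    + simpl INR. rewrite Rmult_0_l. apply Rmult_le_pos; auto. unfold Rdiv.
      apply Rmult_le_pos; [lra|]. apply Rlt_le, Rinv_0_lt_compat; nra.
    + right. assert (0 < INR (S n)) by (apply lt_0_INR; lia). field. lra.
  - rewrite <- lsum_scal, <- (lsum_scal K0). apply lsum_le. intros w Hw.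
    specialize (Hmu_lb j w ltac:(lia) Hw). specialize (HG w).
    replace (K0 * (mu w * Gf w)) with ((K0 * mu w) * Gf w) by ring.
    apply Rmult_le_compat_r; auto.
Qed.

(* Cut a geodesic word for [h] into the slots of [scale_pieces], and cross each piece of
   scale [j] by a detour through the shell [Zf j]; both halves of each detour land in [Uf j]. *)
Lemma translate_energy_le_multiscale (f : G -> R) (h : G) (n : nat)
  (Hh : wlen h n) (HK0 : 0 <= K0)
  (Hcov : INR n <= scale_cover M m J) (Ssum : R)
  (HS : sums_to (fun p : G * G => (f (mul (fst p) (snd p)) - f (fst p))^2 * mu (snd p)) Ssum) :
  forall l, NoDup l -> lsum (fun x => (f (mul x h) - f x)^2) l <= scale_cost psi m J * K0 * Ssum.
Proof.
  intros l Hl.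
  destruct (wlen_wle _ _ Hh) as [w0 [Hw0l [Hw0f Hw0]]].
  set (sz := scale_pieces M m psi J).
  destruct (split_word_into_pieces sz w0 Hw0f) as [ps [Hps Hprod]].
  { apply INR_le. unfold sz. rewrite INR_pieces_length_scale. apply le_INR in Hw0l. lra. }
  assert (Hwt : forall p, In p ps -> 0 < snd p).
  { intros p Hp. destruct (fits_scale_piece _ _ _ _ _ _ Hps Hp) as [j [Hj [Hmj [_ [E2 _]]]]].
    rewrite E2. apply Rmult_lt_0_compat; [apply Hpsi; auto | apply lt_0_INR; lia]. }
  assert (HWf : lsum snd ps = scale_cost psi m J).
  { rewrite (Forall2_lsum fits_piece snd snd ps sz Hps); [apply lsum_scale_pieces|].
    intros a b [_ [E _]]; auto. }
  rewrite <- HWf.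
  apply (translate_energy_le_of_chain f mu h (detour_path Zf e ps) (lsum snd ps) K0
           (flat_map Uf (seq 1 J)) Ssum); auto.
  - apply detour_path_weights_nonneg; auto.
  - apply lsum_nonneg. intros; apply Rlt_le; auto.
  - intros F. rewrite <- Hw0, <- Hprod, <- (mul1g (path_prod ps)) at 1.
    apply detour_path_energy_ge. intros p Hp.
    destruct (fits_scale_piece _ _ _ _ _ _ Hps Hp) as [j [Hj [_ [E1 _]]]].
    rewrite E1. split; auto. apply HZ; lia.
  - apply NoDup_flat_map_shells; lia.
  - intros Gf HG. eapply Rle_trans; [apply (detour_path_load_le Zf Uf); auto|].
    + intros p Hp. destruct (fits_scale_piece _ _ _ _ _ _ Hps Hp) as [j [Hj [Hmj [E1 [_ E3]]]]].
      rewrite E1. destruct (HZ j) as [HZ1 [HZ2 HZ3]]; [lia|]. repeat split; auto.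
      * intros z Hz. destruct (HZ3 z Hz) as [nz [Hnz Hnzr]]. apply HU.
        exists nz. split; auto. lia.
      * intros z Hz. destruct (HZ3 z Hz) as [nz [Hnz Hnzr]]. apply HU.
        apply (shell_inv_mul M j _ z nz); auto.
    + apply scale_pieces_load_le; auto.
Qed.

End Multiscale.

Section Volume.
Variables (d c1 c2 : R).
Hypothesis Hd : 0 < d.
Hypothesis Hc1 : 0 < c1.
Hypothesis Hc2 : 0 < c2.
Hypothesis Hvol : forall r, 1 <= r -> forall l : list G, NoDup l ->
  (forall h, In h l <-> exists n, wlen h n /\ INR n <= r) ->
  c1 * Rpower r d <= INR (length l) <= c2 * Rpower r d.

Lemma shell_card_ge (lo hi : nat) (Z : list G) : (1 <= lo <= hi)%nat -> NoDup Z ->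
  (forall z, In z Z <-> exists n, wlen z n /\ (lo < n <= hi)%nat) ->
  c1 * Rpower (INR hi) d - c2 * Rpower (INR lo) d <= INR (length Z).
Proof.
  intros Hlh HZn HZ.
  assert (Hball : forall k, (1 <= k)%nat -> exists L, NoDup L /\
     c1 * Rpower (INR k) d <= INR (length L) <= c2 * Rpower (INR k) d /\
     forall x, In x L <-> exists n, wlen x n /\ (n <= k)%nat).
  { intros k Hk. destruct (exists_ball_list k) as [L [HL HLi]].
    exists L. split; [exact HL | split; [|exact HLi]].
    apply Hvol; auto; [apply (le_INR 1); auto|].
    intros x; rewrite HLi; split; intros [n [Hn Hn']]; exists n; split; auto;
      [apply le_INR | apply INR_le]; auto. }
  destruct (Hball hi ltac:(lia)) as [LA [HLA [[HA _] HLAi]]].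
  destruct (Hball lo ltac:(lia)) as [LB [HLB [[_ HB] HLBi]]].
  assert (Hlen : (length LA <= length (Z ++ LB))%nat).
  { apply NoDup_incl_length; auto. intros x Hx. apply HLAi in Hx as [n [Hn Hn']].
    apply in_or_app. destruct (Nat.le_gt_cases n lo).
    - right. apply HLBi. eauto.
    - left. apply HZ. exists n; split; auto; lia. }
  rewrite length_app in Hlen. apply le_INR in Hlen. rewrite plus_INR in Hlen. lra.
Qed.

Variable M : nat.
Hypothesis HM : (4 <= M)%nat.
Hypothesis Hratio : Rpower (4 / INR M) d <= c1 / (2 * c2).

Lemma stones_card_ge j (Z : list G) : (1 <= j)%nat -> NoDup Z ->
  (forall z, In z Z <-> exists nz, wlen z nz /\ (2 * M ^ (j - 1) < nz <= M ^ j - M ^ (j - 1))%nat) ->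
  c1 * Rpower (1/2) d / 2 * Rpower (INR M ^ j) d <= INR (length Z).
Proof.
  intros Hj HZn HZ.
  assert (Hpow : (M ^ j = M * M ^ (j - 1))%nat)
    by (destruct j; [lia | simpl; rewrite Nat.sub_0_r; auto]).
  assert (Hp1 : (1 <= M ^ (j - 1))%nat)
    by (assert (M ^ (j - 1) <> 0)%nat by (apply Nat.pow_nonzero; lia); lia).
  assert (HMr : 4 <= INR M) by (replace 4 with (INR 4) by (simpl; lra); apply le_INR; auto).
  set (Y := INR M ^ (j - 1)).
  assert (HY : 1 <= Y) by (apply pow_R1_Rle; lra).
  assert (HA : INR (M ^ j - M ^ (j - 1)) = INR M * Y - Y).
  { rewrite minus_INR by (rewrite Hpow; nia). rewrite Hpow, mult_INR, !pow_INR. reflexivity. }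
  assert (HB : INR (2 * M ^ (j - 1)) = 2 * Y).
  { rewrite mult_INR, pow_INR. replace (INR 2) with 2 by (simpl; lra). reflexivity. }
  assert (HX : INR M ^ j = INR M * Y)
    by (unfold Y; rewrite <- !pow_INR, <- mult_INR, <- Hpow; reflexivity).
  eapply Rle_trans;
    [|apply (shell_card_ge (2 * M ^ (j - 1)) (M ^ j - M ^ (j - 1)) Z); auto; rewrite Hpow; nia].
  rewrite HA, HB, HX.
  apply shell_volume_arith; auto.
Qed.

Lemma exists_multiscale_shells : exists (Zf Uf : nat -> list G) (cz : R), 0 < cz /\
  (forall j, (1 <= j)%nat -> NoDup (Zf j) /\ Zf j <> [] /\
     forall z, In z (Zf j) ->
       exists nz, wlen z nz /\ (2 * M ^ (j - 1) < nz <= M ^ j - M ^ (j - 1))%nat) /\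
  (forall j, NoDup (Uf j) /\
     forall w, In w (Uf j) <-> exists n, wlen w n /\ (M ^ (j - 1) < n <= M ^ j)%nat) /\
  (forall j, (1 <= j)%nat -> cz * Rpower (INR M ^ j) d <= INR (length (Zf j))).
Proof.
  exists (fun j => proj1_sig (constructive_indefinite_description _
                     (exists_shell_list (2 * M ^ (j - 1)) (M ^ j - M ^ (j - 1))))).
  exists (fun j => proj1_sig (constructive_indefinite_description _
                     (exists_shell_list (M ^ (j - 1)) (M ^ j)))).
  set (cz := c1 * Rpower (1/2) d / 2).
  assert (Hcz : 0 < cz) by (unfold cz; assert (0 < Rpower (1/2) d) by apply Rpower_pos; nra).
  exists cz. split; [exact Hcz|].
  split; [|split]; intros j;
    destruct (constructive_indefinite_description _ _) as [L [HL HLi]]; simpl.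
  - intros Hj. split; [exact HL | split].
    + intros E. assert (H := stones_card_ge j L Hj HL HLi). rewrite E in H. simpl in H.
      assert (0 < Rpower (INR M ^ j) d) by apply Rpower_pos. fold cz in H. nra.
    + intros z Hz. apply HLi, Hz.
  - split; [exact HL | exact HLi].
  - intros Hj. apply stones_card_ge; auto.
Qed.

End Volume.

Lemma exists_shell_weight_bound (phi : R -> R) (Hphi_pos : forall t, 0 < t -> 0 < phi t)
  (Hphi_incr : forall s t, 0 < s -> s <= t -> phi s <= phi t)
  (Kd : R) (HKd : 1 <= Kd) (Hdb : forall t, 1 <= t -> phi (2 * t) <= Kd * phi t)
  (d a1 : R) (Hd : 0 < d) (Ha1 : 0 < a1) (mu : G -> R)
  (Hmu : forall h n, wlen h n -> a1 / (phi (1 + INR n) * Rpower (1 + INR n) d) <= mu h)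
  (M : nat) (HM : (1 <= M)%nat) (Zf Uf : nat -> list G)
  (HU : forall j w, In w (Uf j) -> exists n, wlen w n /\ (M ^ (j - 1) < n <= M ^ j)%nat)
  (cz : R) (Hcz : 0 < cz)
  (HZ : forall j, (1 <= j)%nat -> cz * Rpower (INR M ^ j) d <= INR (length (Zf j))) :
  exists K0, 0 <= K0 /\ forall j w, (1 <= j)%nat -> In w (Uf j) ->
    4 / (phi (INR M ^ j) * INR (length (Zf j))) <= K0 * mu w.
Proof.
  exists (4 * Kd * Rpower 2 d / (cz * a1)). split.
  - assert (0 < Rpower 2 d) by apply Rpower_pos.
    apply Rmult_le_pos; [nra | apply Rlt_le, Rinv_0_lt_compat; nra].
  - intros j w Hj Hw. destruct (HU j w Hw) as [nw [Hnw Hb]].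
    apply (shell_weight_le_mu phi Hphi_pos Hphi_incr Kd HKd Hdb d a1 cz _ _ (INR nw)); auto.
    + apply pow_R1_Rle, (le_INR 1); auto.
    + split; [apply pos_INR | rewrite <- pow_INR; apply le_INR; lia].
Qed.

End Group.

Theorem mainTheorem11
  (G : Type) (mul : G -> G -> G) (inv : G -> G) (e : G)
  (Hgrp : is_group mul inv e) (Hcount : countable G)
  (H : G -> Prop) (S : list G)
  (HS_sym : forall s, In s S -> In (inv s) S)
  (HS_gen : forall h, H h <-> exists n, word_le mul e S h n)
  (mu : G -> R)
  (Hmu_nonneg : forall y, 0 <= mu y)
  (Hmu_prob : sums_to mu 1)
  (Hmu_sym : forall y, mu (inv y) = mu y)
  (Hmu_supp : forall y, mu y <> 0 -> H y)
  (d : R) (Hd : 0 < d)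
  (phi : R -> R)
  (Hphi_pos : forall t, 0 < t -> 0 < phi t)
  (Hphi_incr : forall s t, 0 < s -> s <= t -> phi s <= phi t)
  (gamma : R) (Hgamma : 0 < gamma) (Hphi_rv : regularly_varying phi gamma)
  (Hvol : exists c1 c2, 0 < c1 /\ 0 < c2 /\
     forall r, 1 <= r -> forall l : list G, NoDup l ->
       (forall h, In h l <-> exists n, word_length mul e S h n /\ INR n <= r) ->
       c1 * Rpower r d <= INR (length l) <= c2 * Rpower r d)
  (Hmu_est : exists c1 c2, 0 < c1 /\ 0 < c2 /\
     forall h n, H h -> word_length mul e S h n ->
       c1 / (phi (1 + INR n) * Rpower (1 + INR n) d) <= mu h <=
       c2 / (phi (1 + INR n) * Rpower (1 + INR n) d))
  (Phi : R -> R)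
  (HPhi : forall t, 1 <= t ->
     exists I, improper_int0 (fun s => s / phi s) t I /\ Phi t = t ^ 2 / I) :
  exists C : R,
    forall f : G -> R, in_L2 f ->
    forall (Rr : R), 1 <= Rr ->
    forall (h : G) (n : nat), H h -> word_length mul e S h n -> INR n <= Rr ->
    forall Ssum : R,
      sums_to (fun p : G * G => (f (mul (fst p) (snd p)) - f (fst p)) ^ 2 * mu (snd p)) Ssum ->
      forall l : list G, NoDup l ->
        lsum (fun x => (f (mul x h) - f x) ^ 2) l <= C * Phi Rr * (Ssum / 2).
Proof.
  destruct Hvol as [c1 [c2 [Hc1 [Hc2 Hvl]]]].
  destruct Hmu_est as [a1 [a2 [Ha1 [_ Hmu]]]].
  assert (Hmu_lo : forall w nw, wlen G mul e S w nw ->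
                     a1 / (phi (1 + INR nw) * Rpower (1 + INR nw) d) <= mu w)
    by (intros w nw Hw; apply Hmu; [apply HS_gen; exists nw; apply wlen_wle |]; auto).
  assert (Hint : forall t, 1 <= t -> exists I, improper_int0 (sphi phi) t I)
    by (intros t Ht; destruct (HPhi t Ht) as [I [HI _]]; eauto).
  destruct (HPhi 1 (Rle_refl 1)) as [I1 [HI1 _]].
  destruct (regularly_varying_doubling phi Hphi_pos Hphi_incr gamma Hphi_rv) as [Kd [HKd Hdb]].
  destruct (exists_scale_ratio phi Kd HKd Hdb d (c1 / (2 * c2)) Hd)
    as [M [A [HM [Hratio HA]]]]; [apply Rdiv_lt_0_compat; lra|].
  destruct (scale_parameters phi Hphi_pos Hphi_incr Hint M HM A HA I1 HI1) as [K1 Hpar].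
  destruct (exists_multiscale_shells G mul e S d c1 c2 Hd Hc1 Hc2 Hvl M HM Hratio)
    as [Zf [Uf [cz [Hcz [HZ [HU HZcard]]]]]].
  destruct (exists_shell_weight_bound G mul e S phi Hphi_pos Hphi_incr Kd HKd Hdb d a1 Hd Ha1 mu Hmu_lo
              M ltac:(lia) Zf Uf (fun j w => proj1 (proj2 (HU j) w)) cz Hcz HZcard) as [K0 [HK0 Hmu_lb]].
  exists (2 * K0 * K1).
  intros f _ Rr HRr h n Hh Hhn Hn Ssum HS l Hl.
  destruct (HPhi Rr HRr) as [I [HI ->]].
  destruct (Hpar Rr I HRr HI) as [J [m [Hcov Hcost]]].
  assert (HSpos : 0 <= Ssum)
    by (destruct HS as [Hub _]; apply Hub; exists []; split; [constructor | reflexivity]).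
  eapply Rle_trans.
  { apply (translate_energy_le_multiscale G mul inv e Hgrp S HS_sym M ltac:(lia) Zf Uf HZ HU mu m
             (fun j => phi (INR M ^ j)) J K0 (fun j _ => phi_M_pow_pos phi Hphi_pos M HM j)
             (fun j w Hj => Hmu_lb j w (proj1 Hj)) f h n Hhn HK0 ltac:(lra) Ssum HS l Hl). }
  set (q := Rr ^ 2 / I) in *.
  replace (2 * K0 * K1 * q * (Ssum / 2)) with (K1 * q * K0 * Ssum) by field.
  apply Rmult_le_compat_r; auto. apply Rmult_le_compat_r; auto.
Qed.
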